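(* Let $p$ be prime and $H\le\mathrm{S}_n$ be in $\mathfrak{InP}(\mathrm{C}_p)$, with $B,K,\gamma$ as in the context, and let $H^\perp=\gamma^{-1}(\gamma(H)^\perp)$. Let $b\in B$ and $\kappa\in K$. Then $b\kappa\in N_{\mathrm{S}_n}(H)$ if and only if $b^{-1}\kappa\in N_{\mathrm{S}_n}(H^\perp)$.
   Context: $H\le\mathrm{S}_{n}$, $n=pk$, has orbits $\Omega_1,\dots,\Omega_k$ of size $p$ with each $G_i:=H|_{\Omega_i}$ cyclic of order $p$ (regarded as a subgroup of $\mathrm{S}_n$); $G=G_1\times\dots\times G_k$. For a bijection $\varphi:\Omega_1\to\Omega_j$ ($j\neq1$), $\overline\varphi$ is the involution in $\mathrm{Sym}(\Omega_1\cup\Omega_j)$ with $\alpha^{\overline\varphi}=\varphi(\alpha)$ for $\alpha\in\Omega_1$. For $2\le j\le k$, $\phi_j:\Omega_1\to\Omega_j$ witnesses a permutation isomorphism from $G_1$ to $G_j$. $B=\langle N_{\mathrm{Sym}(\Omega_i)}(G_i):1\le i\le k\rangle$, $K=\langle\overline{\phi_j}:2\le j\le k\rangle$. $g_1$ generates $G_1$, $g_j=g_1^{\overline{\phi_j}}$, and $\gamma:G\to\mathbb{F}_p^k$ is the isomorphism $\gamma(g_1^{r_1}\cdots g_k^{r_k})=(r_1,\dots,r_k)$ (elements of $\mathbb{F}_p$ identified with $0,\dots,p-1$). For a code $C\le\mathbb{F}_p^k$, $C^\perp=\{v: v\cdot c=0 \ \forall c\in C\}$ with the standard dot product. *)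

From HB Require Import structures.
From mathcomp Require Import all_boot all_order all_algebra all_fingroup all_solvable.
Set Implicit Arguments. Unset Strict Implicit. Unset Printing Implicit Defensive.
Import GRing.Theory.
Local Open Scope group_scope.

(* Permutations of 'I_n; mathcomp's product (s * t) x = t (s x) is the
   right-action convention of the paper, and x ^ y = y^-1 * x * y. *)

Section Defs.
Variables (n k : nat).
Notation T := 'I_n.
Implicit Types (H : {group {perm T}}) (Om : 'I_k.+1 -> {set T}).

(* Om lists (without repetition) exactly the H-orbits on T.
   Index ord0 plays the role of Omega_1. *)
Definition orbits_listing H Om : Prop :=
  injective Om /\ [set Om i | i : 'I_k.+1] = orbit 'P H @: [set: T].

Definition Gi H Om (i : 'I_k.+1) : {group {perm T}} :=
  (restr_perm (Om i) @* H)%G.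

Definition Gprod H Om : {set {perm T}} := << \bigcup_(i < k.+1) Gi H Om i >>.

(* t is \overline{phi} for some bijection phi : A -> B, namely phi = t|_A:
   t is an involution of Sym(A u B) mapping A onto B. *)
Definition is_bar (A B : {set T}) (t : {perm T}) : Prop :=
  [/\ (t ^+ 2 = 1)%g, perm_on (A :|: B) t & t @: A = B].

Definition witnesses_iso (A : {set T}) (t : {perm T}) (G1 Gj : {set {perm T}}) : Prop :=
  exists psi : {perm T} -> {perm T},
    [/\ {in G1 &, {morph psi : x y / (x * y)%g}},
        {in G1 &, injective psi}, psi @: G1 = Gj &
        forall g a, g \in G1 -> a \in A -> t (g a) = psi g (t a)].

Definition Bgrp H Om : {set {perm T}} :=
  << \bigcup_(i < k.+1) 'N_(perm.Sym (Om i))(Gi H Om i) >>.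

Definition Kgrp (phibar : 'I_k.+1 -> {perm T}) : {set {perm T}} :=
  << [set phibar j | j in [set j : 'I_k.+1 | j != ord0]] >>.

Definition gen (phibar : 'I_k.+1 -> {perm T}) (g1 : {perm T}) (j : 'I_k.+1) : {perm T} :=
  if j == ord0 then g1 else (g1 ^ phibar j)%g.

(* gamma : G -> F_p^k,  gamma(g_1^{r_1} ... g_k^{r_k}) = (r_1,...,r_k),
   with F_p elements identified with 0..p-1. *)
Definition gamma (p : nat) (phibar : 'I_k.+1 -> {perm T}) (g1 : {perm T})
    (x : {perm T}) : 'rV['F_p]_k.+1 :=
  odflt 0%R [pick r : 'rV['F_p]_k.+1 |
     x == (\prod_(i < k.+1) (gen phibar g1 i ^+ (r ord0 i : nat)))%g].

Definition dotp (p : nat) (u v : 'rV['F_p]_k.+1) : 'F_p :=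
  (\sum_(i < k.+1) u ord0 i * v ord0 i)%R.

Definition perp (p : nat) (C : {set 'rV['F_p]_k.+1}) : {set 'rV['F_p]_k.+1} :=
  [set v | [forall c in C, dotp v c == 0%R]].

Definition Hperp (p : nat) H Om (phibar : 'I_k.+1 -> {perm T}) (g1 : {perm T})
    : {set {perm T}} :=
  Gprod H Om :&: gamma p phibar g1 @^-1: perp (gamma p phibar g1 @: (H : {set _})).

End Defs.

From HB Require Import structures.
From mathcomp Require Import all_boot all_order all_algebra all_fingroup all_solvable.
Set Implicit Arguments. Unset Strict Implicit. Unset Printing Implicit Defensive.
Import GRing.Theory.

(* Write the elements of G = G_1 x ... x G_k as [gamma_inv r = g_1^r_1 ... g_k^r_k]:
   [gamma_inv] is an isomorphism from F_p^k onto G, inverted by [gamma], and H <= G.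
   Conjugation by an element of B rescales every coordinate by a nonzero scalar
   (each generator normalises the cyclic group G_i of prime order), and conjugation
   by an element of K permutes the coordinates (phibar_j swaps g_1 and g_j).  So
   b kappa acts on F_p^k as a monomial matrix M = D P and b^-1 kappa as
   N = D^-1 P, with M N^T = 1.  Thus b kappa normalises H iff C M = C for
   C = gamma(H), and b^-1 kappa normalises H^perp iff C^perp N = C^perp; these are
   equivalent because <u M, v N> = <u, v> and C^perp^perp = C. *)

Local Open Scope ring_scope.

Lemma kermx_trK (F : fieldType) m n (A : 'M[F]_(m, n)) :
  (kermx (kermx A^T)^T :=: A)%MS.
Proof.
have AK : (A <= kermx (kermx A^T)^T)%MS.
  by rewrite sub_kermx -{1}(trmxK A) -trmx_mul mulmx_ker trmx0.
apply/eqmxP; rewrite /eqmx AK andbT -(mxrank_leqif_sup AK).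
by rewrite !(mxrank_ker, mxrank_tr) subKn ?rank_leq_col.
Qed.

Lemma mulmx_tr_eq0 (R : pzRingType) m n (u : 'rV[R]_n) (A : 'M[R]_(m, n)) :
  (u *m A^T == 0) = [forall i, u *m (row i A)^T == 0].
Proof.
have colE' i : u *m (row i A)^T = col i (u *m A^T) by rewrite tr_row !colE mulmxA.
apply/eqP/forallP => [uA0 i | uA0].
  by rewrite colE' uA0; apply/eqP/matrixP => ? ?; rewrite !mxE.
by apply/rowP => i; have /eqP/matrixP/(_ 0 0) := uA0 i; rewrite colE' !mxE.
Qed.

Lemma mulmx_trC (R : comPzRingType) n (M N : 'M[R]_n) :
  M *m N^T = 1%:M -> N *m M^T = 1%:M.
Proof. by move=> MN; rewrite -[N]trmxK -trmx_mul MN trmx1. Qed.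

Section Orthogonal.
Variables (F : finFieldType) (m : nat).
Implicit Types (C : {set 'rV[F]_m}) (M N : 'M[F]_m).

Definition orth C := [set v : 'rV_m | [forall c in C, v *m c^T == 0]].

Lemma orthP C v : reflect {in C, forall c, v *m c^T = 0} (v \in orth C).
Proof.
rewrite inE; apply: (iffP forall_inP) => vC c Cc; first exact/eqP/vC.
by rewrite vC.
Qed.

Lemma orthK C : submod_closed C -> orth (orth C) = C.
Proof.
move=> [C0 CZD]; apply/setP => w; apply/idP/idP => [/orthP w_oo | Cw]; last first.
  by apply/orthP => v /orthP/(_ w Cw) vw; rewrite -[LHS]trmxK trmx_mul trmxK vw trmx0.
pose A := \matrix_(i < #|C|) (enum_val i : 'rV_m).
have orthA v : (v \in orth C) = (v *m A^T == 0).
  rewrite mulmx_tr_eq0 inE; apply/forall_inP/forallP => [vC i | vA c Cc].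
    by rewrite rowK; apply/vC/enum_valP.
  by have := vA (enum_rank_in Cc c); rewrite rowK enum_rankK_in.
have /submxP[D ->] : (w <= A)%MS.
  rewrite -(kermx_trK A) sub_kermx mulmx_tr_eq0; apply/forallP => i.
  by apply/eqP/w_oo; rewrite orthA -row_mul mulmx_ker row0.
rewrite mulmx_sum_row; apply: (big_ind (fun x => x \in C)) => // [u v Cu Cv|i _].
  by rewrite -[u]scale1r CZD.
by rewrite -[_ *: _]addr0 CZD // rowK enum_valP.
Qed.

Lemma orth_mulmx_sub C M N :
    M *m N^T = 1%:M -> [set c *m M | c in C] \subset C ->
  [set v *m N | v in orth C] \subset orth C.
Proof.
move=> MN CM_C.
have injM : injective (fun u : 'rV_m => u *m M).
  by move=> u v uv; rewrite -[u]mulmx1 -MN mulmxA uv -mulmxA MN mulmx1.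
have CM : [set c *m M | c in C] = C.
  by apply/eqP; rewrite eqEcard CM_C (card_imset _ injM) leqnn.
apply/subsetP => vN /imsetP[v /orthP vC ->]; apply/orthP => cM.
rewrite -CM => /imsetP[c Cc ->].
by rewrite trmx_mul mulmxA -(mulmxA v) (mulmx_trC MN) mulmx1 vC.
Qed.

Lemma orth_mulmx_subE C M N :
    M *m N^T = 1%:M -> submod_closed C ->
  ([set c *m M | c in C] \subset C) = ([set v *m N | v in orth C] \subset orth C).
Proof.
move=> MN C_sub; apply/idP/idP; first exact: orth_mulmx_sub.
by move=> /(orth_mulmx_sub (mulmx_trC MN)); rewrite orthK.
Qed.

End Orthogonal.

Lemma perpE p k (C : {set 'rV['F_p]_k.+1}) : perp C = orth C.
Proof.
apply/setP => v; rewrite !inE; apply: eq_forallb => c; congr (_ ==> _).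
have -> : dotp v c = (v *m c^T) 0 0 by rewrite mxE; apply: eq_bigr => i _; rewrite mxE.
apply/eqP/eqP => [vc0 | ->]; last by rewrite mxE.
by apply/matrixP => i j; rewrite !ord1 vc0 mxE.
Qed.

Lemma mulmx_diag_inv (F : fieldType) m (d : 'rV[F]_m) :
  (forall j, d 0 j != 0) -> diag_mx d *m diag_mx (\row_j (d 0 j)^-1) = 1%:M.
Proof.
move=> d_nz; rewrite mulmx_diag -diag_const_mx; congr diag_mx.
by apply/rowP => j; rewrite !mxE mulfV.
Qed.

Lemma monomial_mx_trV (F : fieldType) m (d : 'rV[F]_m) (s : 'S_m) :
    (forall j, d 0 j != 0) ->
  (diag_mx d *m perm_mx s) *m (diag_mx (\row_j (d 0 j)^-1) *m perm_mx s)^T = 1%:M.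
Proof.
move=> d_nz; rewrite trmx_mul tr_perm_mx tr_diag_mx mulmxA -(mulmxA _ (perm_mx s)).
by rewrite -perm_mxM mulgV perm_mx1 mulmx1 mulmx_diag_inv.
Qed.

Local Open Scope group_scope.

Lemma gen_prodg_ind (gT : finGroupType) (A : {set gT}) (P : gT -> Prop) :
    P 1 -> (forall x y, P x -> P y -> P (x * y)) -> {in A, forall x, P x} ->
  {in <<A>>, forall x, P x}.
Proof.
by move=> P1 PM PA x /gen_prodgP[m [c Ac ->]]; apply: (big_ind P) => // i _; apply: PA.
Qed.

Lemma commute_conjg (gT : finGroupType) (x y : gT) : commute x y -> x ^ y = x.
Proof. by move=> xy; apply/conjg_fixP/commgP. Qed.

Lemma prod_perm_on_disjointE (T I : finType) (S : I -> {set T}) (f : I -> {perm T}) j a :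
    (forall i, perm_on (S i) (f i)) -> (forall i, i != j -> [disjoint S i & S j]) ->
  a \in S j -> (\prod_i f i) a = f j a.
Proof.
move=> fS dS Sa.
suff: (\prod_(i <- index_enum I) f i) a = if j \in index_enum I then f j a else a.
  by rewrite mem_index_enum.
elim: (index_enum I) (index_enum_uniq I) a Sa => [|i s IHs] /=.
  by move=> *; rewrite big_nil perm1.
case/andP=> i_s s_uniq a Sa; rewrite big_cons permM in_cons.
have [ji|ij] /= := eqVneq j i.
  by subst i; rewrite IHs ?(negbTE i_s) // perm_closed.
by rewrite (out_perm (fS i)) ?IHs // (disjointFl (dS i _)) 1?eq_sym.
Qed.

Lemma witnesses_iso_conj n (A B : {set 'I_n}) (t : {perm 'I_n})
    (G1 Gj : {set {perm 'I_n}}) :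
    is_bar A B t -> {in G1, forall g, perm_on A g} -> {in Gj, forall g, perm_on B g} ->
  witnesses_iso A t G1 Gj -> Gj = G1 :^ t.
Proof.
move=> [t2 _ tA] G1A GjB [psi [_ _ psiG1 psiE]].
have tt : t * t = 1 by rewrite -t2 expgS expg1.
have tK : involutive t by move=> a; rewrite -permM tt perm1.
have tV : t^-1 = t by apply/eqP; rewrite eq_invg_mul tt.
rewrite -psiG1; apply: eq_in_imset => g G1g; apply/permP => b.
rewrite conjgE !permM tV.
have [Bb|nBb] := boolP (b \in B).
  by move: Bb; rewrite -tA => /imsetP[a Aa ->]; rewrite tK psiE.
have nAtb : t b \notin A by apply: contra nBb => /(imset_f t); rewrite tA tK.
by rewrite (out_perm (G1A g G1g) nAtb) tK (out_perm (GjB _ _) nBb) // -psiG1 imset_f.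
Qed.

Lemma subset_imset_inj (aT rT : finType) (f : aT -> rT) (A B : {set aT}) :
  injective f -> (f @: A \subset f @: B) = (A \subset B).
Proof.
move=> f_inj; apply/idP/idP => [/subsetP AB | /(imsetS f)//].
by apply/subsetP => x Ax; rewrite -(mem_imset _ _ f_inj) AB ?imset_f.
Qed.

Section Coordinates.
Variables (p n k : nat) (H : {group {perm 'I_n}}) (Om : 'I_k.+1 -> {set 'I_n}).
Variables (phibar : 'I_k.+1 -> {perm 'I_n}) (g1 : {perm 'I_n}).
Hypothesis p_pr : prime p.
Hypothesis Om_orbits : orbits_listing H Om.
Hypothesis Gi_card : forall i, #|Gi H Om i| = p.
Hypothesis phibar_iso : forall j, j != ord0 ->
  is_bar (Om ord0) (Om j) (phibar j) /\
  witnesses_iso (Om ord0) (phibar j) (Gi H Om ord0) (Gi H Om j).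
Hypothesis Gi0 : Gi H Om ord0 :=: <[g1]>.

Local Notation gj := (gen phibar g1).
Local Notation gam := (gamma p phibar g1).
Implicit Types (x y : {perm 'I_n}) (r : 'rV['F_p]_k.+1) (M N : 'M['F_p]_k.+1).

Lemma Om_orbit j : exists a, Om j = orbit 'P H a.
Proof.
case: Om_orbits => _ OmE; have /imsetP[a _ ->] : Om j \in orbit 'P H @: setT.
  by rewrite -OmE imset_f.
by exists a.
Qed.

Lemma Om_orbitE j a : a \in Om j -> Om j = orbit 'P H a.
Proof. by have [b ->] := Om_orbit j => /orbit_eqP. Qed.

Lemma Om_cover a : exists j, a \in Om j.
Proof.
case: Om_orbits => _ OmE.
have /imsetP[j _ Ej] : orbit 'P H a \in [set Om i | i : 'I_k.+1].
  by rewrite OmE imset_f.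
by exists j; rewrite -Ej orbit_refl.
Qed.

Lemma Om_disjoint i j : i != j -> [disjoint Om i & Om j].
Proof.
case: Om_orbits => Om_inj _ ij; rewrite disjoints_subset; apply/subsetP => a ai.
rewrite inE; apply: contra ij => aj.
by rewrite (Om_inj i j) ?eqxx // (Om_orbitE ai) (Om_orbitE aj).
Qed.

Lemma H_acts_Om j : H \subset 'N(Om j | 'P).
Proof. by have [a ->] := Om_orbit j; apply/acts_orbit/subsetT. Qed.

Lemma Gi_perm_on j x : x \in Gi H Om j -> perm_on (Om j) x.
Proof. by case/morphimP => y _ _ ->; apply: restr_perm_on. Qed.

Lemma Gi_cycle j : Gi H Om j :=: <[gj j]>.
Proof.
rewrite /gen; have [-> | j0] := eqVneq j ord0; first by rewrite Gi0.
have [bar_j iso_j] := phibar_iso j0.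
by rewrite cycleJ -Gi0 (witnesses_iso_conj bar_j _ _ iso_j) // => x /Gi_perm_on.
Qed.

Lemma order_gen j : #[gj j] = p.
Proof. by rewrite /order -Gi_cycle Gi_card. Qed.

Lemma gen_perm_on j m : perm_on (Om j) (gj j ^+ m).
Proof. by apply: Gi_perm_on; rewrite Gi_cycle mem_cycle. Qed.

Lemma Fp_ltp (a : 'F_p) : (a < p)%N.
Proof. by rewrite -[p in (_ < p)%N](Fp_cast p_pr) ltn_ord. Qed.

Lemma expg_Fp j m : gj j ^+ (m%:R : 'F_p)%R = gj j ^+ m.
Proof. by rewrite Zp_nat /= Fp_cast // -(order_gen j) expg_mod_order. Qed.

Lemma perm_orbitwise_eq x y : (forall j, {in Om j, x =1 y}) -> x = y.
Proof. by move=> xy; apply/permP => a; have [j /xy] := Om_cover a. Qed.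

(* Literally the product in the definition of [gamma], which therefore inverts it. *)
Definition gamma_inv r : {perm 'I_n} := \prod_(i < k.+1) gj i ^+ r ord0 i.

Lemma gamma_invE r j a : a \in Om j -> gamma_inv r a = (gj j ^+ r ord0 j) a.
Proof.
apply: prod_perm_on_disjointE => [i | i ij]; first exact: gen_perm_on.
exact: Om_disjoint.
Qed.

Lemma gamma_inv_inj : injective gamma_inv.
Proof.
move=> r s rs; apply/rowP => j.
have : gj j ^+ r ord0 j = gj j ^+ s ord0 j.
  apply/permP => a; have [aj | naj] := boolP (a \in Om j).
    by rewrite -!gamma_invE // rs.
  by rewrite !(out_perm (gen_perm_on _ _) naj).
move/eqP; rewrite eq_expg_mod_order order_gen !modn_small ?Fp_ltp //.
by move/eqP/val_inj.
Qed.

Lemma gamma_invD r s : gamma_inv (r + s)%R = gamma_inv r * gamma_inv s.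
Proof.
apply: perm_orbitwise_eq => j a aj.
rewrite permM !(gamma_invE _ aj) (@gamma_invE s j) ?(perm_closed _ (gen_perm_on _ _)) //.
by rewrite -permM -expgD -(expg_Fp j (r ord0 j + s ord0 j)) natrD !natr_Zp mxE.
Qed.

Lemma gamma_inv0 : gamma_inv 0%R = 1.
Proof.
by apply: perm_orbitwise_eq => j a aj; rewrite (gamma_invE _ aj) mxE expg0 perm1.
Qed.

Lemma gamma_invMn r m : gamma_inv (r *+ m)%R = gamma_inv r ^+ m.
Proof.
elim: m => [|m IHm]; first by rewrite mulr0n gamma_inv0.
by rewrite mulrS gamma_invD IHm expgS.
Qed.

Lemma gamma_invZ (a : 'F_p) r : gamma_inv (a *: r)%R = gamma_inv r ^+ a.
Proof. by rewrite -{1}[a]natr_Zp scaler_nat gamma_invMn. Qed.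

Lemma gamma_inv_delta j : gamma_inv (delta_mx 0 j)%R = gj j.
Proof.
apply: perm_orbitwise_eq => i a ai; rewrite (gamma_invE _ ai) mxE expg_Fp /=.
have [-> // | ij] := eqVneq i j.
rewrite expg0 perm1 (out_perm (gen_perm_on j 1)) //.
by rewrite (disjointFr (Om_disjoint ij) ai).
Qed.

Lemma gammaK r : gam (gamma_inv r) = r.
Proof.
rewrite /gamma; case: pickP => [s /eqP/gamma_inv_inj // | no_r].
by have := no_r r; rewrite eqxx.
Qed.

Lemma Gprod_gamma_inv : Gprod H Om = gamma_inv @: setT.
Proof.
apply/eqP; rewrite eqEsubset; apply/andP; split; apply/subsetP; last first.
  move=> _ /imsetP[r _ ->]; apply: group_prod => i _; apply/groupX/mem_gen/bigcupP.
  by exists i; rewrite // Gi_cycle cycle_id.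
apply: gen_prodg_ind => [|_ _ /imsetP[r _ ->] /imsetP[s _ ->] | x /bigcupP[j _]].
- by rewrite -gamma_inv0 imset_f.
- by rewrite -gamma_invD imset_f.
by rewrite Gi_cycle => /cycleP[m ->]; rewrite -gamma_inv_delta -gamma_invMn imset_f.
Qed.

Lemma H_sub_Gprod : H \subset Gprod H Om.
Proof.
apply/subsetP => h Hh.
have NOm j : h \in 'N(Om j | 'P) := subsetP (H_acts_Om j) h Hh.
have -> : h = \prod_i restr_perm (Om i) h.
  apply: perm_orbitwise_eq => j a aj.
  rewrite (prod_perm_on_disjointE _ (fun i ij => Om_disjoint ij) aj) ?restr_permE //.
  by move=> i; apply: restr_perm_on.
rewrite /Gprod; apply: group_prod => i _; apply/mem_gen/bigcupP; exists i => //.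
by apply/morphimP; exists h => //; apply: NOm.
Qed.

Lemma gamma_invK x : x \in Gprod H Om -> gamma_inv (gam x) = x.
Proof. by rewrite Gprod_gamma_inv => /imsetP[r _ ->]; rewrite gammaK. Qed.

Lemma gamma_inv_preimK : gamma_inv @: (gamma_inv @^-1: H) = H.
Proof.
apply/setP => h; apply/imsetP/idP => [[r] | Hh]; first by rewrite inE => Hr ->.
by exists (gam h); rewrite ?inE gamma_invK // (subsetP H_sub_Gprod).
Qed.

Lemma gamma_H : gam @: H = gamma_inv @^-1: H.
Proof.
apply/setP => r; rewrite inE; apply/imsetP/idP => [[h Hh ->] | Hr].
  by rewrite gamma_invK // (subsetP H_sub_Gprod).
by exists (gamma_inv r); rewrite ?gammaK.
Qed.

Lemma Hperp_gamma_inv : Hperp p H Om phibar g1 = gamma_inv @: orth (gamma_inv @^-1: H).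
Proof.
rewrite /Hperp gamma_H perpE; apply/setP => x; rewrite !inE.
apply/andP/imsetP => [[Gx xperp] | [r rperp ->]].
  by exists (gam x); rewrite ?gamma_invK // inE.
by rewrite inE in rperp; rewrite gammaK Gprod_gamma_inv imset_f.
Qed.

Lemma submod_closed_gamma_inv_preim : submod_closed (gamma_inv @^-1: H).
Proof.
split=> [|a u v]; first by rewrite inE gamma_inv0 group1.
by rewrite !inE gamma_invD gamma_invZ => Hu Hv; rewrite groupM ?groupX.
Qed.

Definition conj_mx y M := forall r, gamma_inv r ^ y = gamma_inv (r *m M)%R.

Lemma conj_mxP y M : (forall j, gj j ^ y = gamma_inv (row j M)) -> conj_mx y M.
Proof.
move=> yM r; rewrite mulmx_sum_row (big_morph gamma_inv gamma_invD gamma_inv0).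
rewrite (big_morph (conjg^~ y) (fun u v => conjMg u v y) (conj1g y)).
by apply: eq_bigr => j _; rewrite conjXg yM gamma_invZ.
Qed.

Lemma conj_mx1 : conj_mx 1 1%:M%R.
Proof. by move=> r; rewrite conjg1 mulmx1. Qed.

Lemma conj_mxM y z M N : conj_mx y M -> conj_mx z N -> conj_mx (y * z) (M *m N)%R.
Proof. by move=> yM zN r; rewrite conjgM yM zN mulmxA. Qed.

Lemma conj_mxV y M N : conj_mx y M -> (N *m M = 1%:M)%R -> conj_mx y^-1 N.
Proof. by move=> yM NM r; rewrite -{1}[r]mulmx1 -NM mulmxA -yM conjgK. Qed.

Lemma conj_diag y (d : 'rV['F_p]_k.+1) :
  (forall j, gj j ^ y = gj j ^+ d 0 j) -> conj_mx y (diag_mx d).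
Proof.
by move=> yd; apply: conj_mxP => j; rewrite row_diag_mx gamma_invZ gamma_inv_delta yd.
Qed.

Lemma conj_perm y (s : 'S_k.+1) :
  (forall j, gj j ^ y = gj (s j)) -> conj_mx y (perm_mx s).
Proof.
move=> ys; apply: conj_mxP => j; rewrite ys -gamma_inv_delta; congr gamma_inv.
by apply/rowP => i; rewrite !mxE eq_sym.
Qed.

Lemma norm_gamma_inv y M (S : {set 'rV['F_p]_k.+1}) :
  conj_mx y M -> (y \in 'N(gamma_inv @: S)) = ([set r *m M | r in S]%R \subset S).
Proof.
move=> yM; rewrite inE -(subset_imset_inj _ _ gamma_inv_inj) /conjugate -imset_comp.
by rewrite -imset_comp (eq_imset _ yM).
Qed.

Lemma conj_Bgrp_gen i s : s \in 'N_(perm.Sym (Om i))(Gi H Om i) ->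
  exists2 d : 'rV['F_p]_k.+1, (forall j, d 0 j != 0)%R & conj_mx s (diag_mx d).
Proof.
case/setIP; rewrite inE => s_on /normP Ns.
have /cycleP[c gis] : gj i ^ s \in <[gj i]>.
  by rewrite -Gi_cycle -Ns memJ_conjg Gi_cycle cycle_id.
exists (\row_j (if j == i then c else 1)%:R)%R => [j | ]; last first.
  apply: conj_diag => j; rewrite mxE expg_Fp; have [-> // | ji] := eqVneq j i.
  rewrite expg1 commute_conjg // -[gj j]expg1.
  exact: perm_onC (gen_perm_on j 1) s_on (Om_disjoint ji).
rewrite mxE; have [ji | _] := eqVneq j i; last exact: oner_neq0.
apply/eqP => c0; have := prime_gt1 p_pr.
by rewrite -(order_gen i) -(orderJ _ s) gis -expg_Fp c0 expg0 order1.
Qed.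

Lemma conj_Bgrp b : b \in Bgrp H Om ->
  exists2 d : 'rV['F_p]_k.+1, (forall j, d 0 j != 0)%R & conj_mx b (diag_mx d).
Proof.
move: b; apply: gen_prodg_ind => [| y z [d d_nz yd] [e e_nz ze] | s].
- exists (const_mx 1)%R => [j|]; first by rewrite mxE oner_neq0.
  by rewrite diag_const_mx; apply: conj_mx1.
- exists (\row_j (d 0 j * e 0 j))%R => [j|]; first by rewrite mxE mulf_neq0.
  by rewrite -mulmx_diag; apply: conj_mxM.
by case/bigcupP => i _ /conj_Bgrp_gen.
Qed.

Lemma conj_phibar j : j != ord0 -> conj_mx (phibar j) (perm_mx (tperm ord0 j)).
Proof.
move=> j0; have [[t2 t_on _] _] := phibar_iso j0.
have tt : phibar j * phibar j = 1 by rewrite -t2 expgS expg1.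
apply: conj_perm => i; case: tpermP => [-> | -> | /eqP i0 /eqP ij].
- by rewrite /gen eqxx (negbTE j0).
- by rewrite /gen eqxx (negbTE j0) -conjgM tt conjg1.
apply: commute_conjg; rewrite -[gj i]expg1; apply: perm_onC (gen_perm_on i 1) t_on _.
by rewrite disjoints_subset setCU subsetI -!disjoints_subset !Om_disjoint.
Qed.

Lemma conj_Kgrp c : c \in Kgrp phibar -> exists s : 'S_k.+1, conj_mx c (perm_mx s).
Proof.
move: c; apply: gen_prodg_ind => [| y z [s ys] [t zt] | _ /imsetP[j j0 ->]].
- by exists 1; rewrite perm_mx1; apply: conj_mx1.
- by exists (s * t); rewrite perm_mxM; apply: conj_mxM.
by exists (tperm ord0 j); apply: conj_phibar; rewrite inE in j0.
Qed.

Lemma normaliser_Hperp b c : b \in Bgrp H Om -> c \in Kgrp phibar ->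
  (b * c \in 'N(H)) = (b^-1 * c \in 'N(Hperp p H Om phibar g1)).
Proof.
move=> /conj_Bgrp[d d_nz bd] /conj_Kgrp[s cs].
have bVd := conj_mxV bd (mulmx1C (mulmx_diag_inv d_nz)).
rewrite -{1}gamma_inv_preimK Hperp_gamma_inv.
rewrite (norm_gamma_inv _ (conj_mxM bd cs)) (norm_gamma_inv _ (conj_mxM bVd cs)).
exact: orth_mulmx_subE (monomial_mx_trV s d_nz) submod_closed_gamma_inv_preim.
Qed.

End Coordinates.

Theorem lemma4p1 (p n k : nat) (H : {group {perm 'I_n}})
    (Om : 'I_k.+1 -> {set 'I_n}) (phibar : 'I_k.+1 -> {perm 'I_n})
    (g1 b kappa : {perm 'I_n}) :
  prime p ->
  orbits_listing H Om ->
  (forall i, #|Om i| = p) ->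
  (forall i, cyclic (Gi H Om i) /\ #|Gi H Om i| = p) ->
  (forall j, j != ord0 ->
     is_bar (Om ord0) (Om j) (phibar j) /\
     witnesses_iso (Om ord0) (phibar j) (Gi H Om ord0) (Gi H Om j)) ->
  (Gi H Om ord0 :=: <[g1]>)%g ->
  b \in Bgrp H Om ->
  kappa \in Kgrp phibar ->
  ((b * kappa)%g \in 'N(H)%g) = ((b^-1 * kappa)%g \in 'N(Hperp p H Om phibar g1)%g).
Proof.
move=> p_pr Om_orbits _ Gi_cyclic phibar_iso Gi0.
by apply: normaliser_Hperp => // i; case: (Gi_cyclic i).
Qed.
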